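(* Let $\mathcal{N}=(D,P)$ be a broadcast network with client $P=(Q,I,\delta)$, let $m\le |Q|$ and $s_1,\dots,s_m\in Q$. There is a cycle $(\{s_1\},\dots,\{s_m\})\to_G^+(\{s_1\},\dots,\{s_m\})$ (a path with at least one edge) in the graph $G$ if and only if there is a configuration $c$ with $\mathrm{Set}(c)=\{s_1,\dots,s_m\}$ and $c\to^+ c$.
   Context: A broadcast network is a pair $\mathcal{N}=(D,P)$ where $D$ is a finite set of messages and $P=(Q,I,\delta)$ is a finite automaton with transition relation $\delta\subseteq Q\times \mathrm{Ops}(D)\times Q$, $\mathrm{Ops}(D)=\{!a,\ ?a : a\in D\}$; write $q\xrightarrow{o}q'$ for $(q,o,q')\in\delta$. A configuration is a tuple $c\in Q^k$, $k\in\mathbb{N}$, with entries $c[i]$ and set of occurring states $\mathrm{Set}(c)$. For $c,c'\in Q^k$ and $a\in D$, $c\xrightarrow{a}c'$ holds if some index $i$ has $c[i]\xrightarrow{!a}c'[i]$, there is $R\subseteq[1..k]\setminus\{i\}$ with $c[j]\xrightarrow{?a}c'[j]$ for all $j\in R$, and $c[j]=c'[j]$ for $j\notin R\cup\{i\}$; $c\to^+c'$ means a sequence of at least one such transition. For $S\subseteq Q$ and $a\in D$ let $\mathrm{Post}_{?a}(S)=\{r'\in Q: \exists r\in S,\ r\xrightarrow{?a}r'\}$ and $\mathrm{Enabled}_{?a}(S)=\{r\in S : \mathrm{Post}_{?a}(\{r\})\neq\emptyset\}$. The graph $G=(V,\to_G)$ has vertex set $V=\bigcup_{k\le|Q|}(2^Q)^k$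 (tuples of sets of states). There is an edge $(S_1,\dots,S_k)\to_G(S'_1,\dots,S'_k)$ iff: (1) there are $j\in[1..k]$, $s\in S_j$, $s'\in S'_j$, $a\in D$ with $s\xrightarrow{!a}s'$; (2) for each $i\in[1..k]$ there are $\mathrm{Gen}_i\subseteq\mathrm{Post}_{?a}(S_i)$ and $\mathrm{Kill}_i\subseteq\mathrm{Enabled}_{?a}(S_i)$ such that $S'_i=(S_i\setminus\mathrm{Kill}_i)\cup\mathrm{Gen}_i$ for $i\neq j$ and $S'_j=(U_j\setminus\mathrm{Kill}_j)\cup\mathrm{Gen}_j\cup\{s'\}$, where $U_j$ is either $S_j$ or $S_j\setminus\{s\}$; (3) for each $i\in[1..k]$ and each $q\in\mathrm{Kill}_i$, $\mathrm{Post}_{?a}(\{q\})\cap\mathrm{Gen}_i\neq\emptyset$. *)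

From mathcomp Require Import all_boot.
From Stdlib Require Export Relations.Relation_Operators.
Set Implicit Arguments. Unset Strict Implicit. Unset Printing Implicit Defensive.

(* D and Q are finite types,
   I : {set Q} the initial states, delta : Q -> Ops D -> Q -> bool the
   transition relation (q --o--> q' iff delta q o q'). *)
Inductive Ops (D : Type) : Type :=
| Send of D
| Recv of D.

Section Broadcast.
Variables (D Q : finType) (delta : Q -> Ops D -> Q -> bool).

Definition config (k : nat) := {ffun 'I_k -> Q}.

Definition SetC k (c : config k) : {set Q} := [set c i | i in 'I_k].

Definition cstep_a k (a : D) (c c' : config k) : Prop :=
  exists i : 'I_k, delta (c i) (Send a) (c' i) /\
  exists R : {set 'I_k}, i \notin R /\
    (forall j, j \in R -> delta (c j) (Recv a) (c' j)) /\
    (forall j, j \notin R -> j != i -> c j = c' j).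

Definition cstep k (c c' : config k) : Prop := exists a, cstep_a a c c'.

Definition cstep_plus k := clos_trans (config k) (@cstep k).

Definition Post (a : D) (S : {set Q}) : {set Q} :=
  [set r' | [exists r in S, delta r (Recv a) r']].

Definition Enabled (a : D) (S : {set Q}) : {set Q} :=
  [set r in S | Post a [set r] != set0].

Definition vertex (k : nat) := {ffun 'I_k -> {set Q}}.

Definition Gedge k (S S' : vertex k) : Prop :=
  exists (j : 'I_k) (s s' : Q) (a : D),
    [/\ s \in S j, s' \in S' j & delta s (Send a) s'] /\
  exists Gen Kill : 'I_k -> {set Q},
    [/\ (forall i, Gen i \subset Post a (S i)),
        (forall i, Kill i \subset Enabled a (S i)),
        (forall i, i != j -> S' i = (S i :\: Kill i) :|: Gen i),
        (exists U : {set Q}, (U = S j \/ U = S j :\ s) /\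
            S' j = ((U :\: Kill j) :|: Gen j) :|: [set s'])
      & (forall i q, q \in Kill i -> Post a [set q] :&: Gen i != set0)].

Definition Gpath_plus k := clos_trans (vertex k) (@Gedge k).

End Broadcast.

From Stdlib Require Import Relations.Operators_Properties.
From mathcomp Require Import all_boot.
Set Implicit Arguments. Unset Strict Implicit. Unset Printing Implicit Defensive.

(* (<=) Label every process x of the cycle by some i with c x = s i and map a
   configuration d to the tuple whose i-th entry is the set of states of the
   processes labelled i.  A broadcast step becomes an edge of G: receivers
   account for Gen and Kill, the sender for s -> s', and processes that do not
   take part keep their states.
   (=>) Along a cycle V_0 -> ... -> V_n of G, every state of V_t has a
   predecessor in V_(t-1) and a successor in V_(t+1) by staying, receiving or
   sending, so every local move lies on a trajectory from s_i back to s_i.  Run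
   one process per such trajectory: at time t a process on the sending move of
   the edge broadcasts to the receiving processes, and the other processes on
   a sending move then broadcast one at a time to nobody. *)

Lemma setUD_excess (T : finType) (X Y : {set T}) : (X :|: Y) :\: (Y :\: X) = X.
Proof. by apply/setP => q; rewrite !inE; case: (q \in X); case: (q \in Y). Qed.

Lemma setU3D_excess (T : finType) (X Y Z : {set T}) :
  (X :|: Y :|: Z) :\: (Z :\: X) :\: (Y :\: X) = X.
Proof.
by apply/setP => q; rewrite !inE; case: (q \in X); case: (q \in Y); case: (q \in Z).
Qed.

Lemma setD_excess1 (T : finType) (X S : {set T}) z :
  S :\: ([set z] :\: X) = S \/ S :\: ([set z] :\: X) = S :\ z.
Proof.
have [zX|zX] := boolP (z \in X); [left|right].
  have /eqP -> : [set z] :\: X == set0 by rewrite setD_eq0 sub1set.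
  by rewrite setD0.
by congr (_ :\: _); apply/setDidPl; rewrite disjoints1.
Qed.

Lemma clos_trans_labelled_path (X L : Type) (R : X -> X -> Prop)
    (E : X -> L -> X -> Prop) x y :
  (forall u v, R u v -> exists e, E u e v) -> clos_trans X R x y ->
  exists n (f : nat -> X) (h : nat -> L),
    [/\ 0 < n, f 0 = x, f n = y & forall t, t < n -> E (f t) (h t) (f t.+1)].
Proof.
move=> RE /(clos_trans_t1n _ _ _ _) xy.
elim: xy => [u v /RE [e Euv]|u v w /RE [e Euv] _ [n [f [h [_ f0 fn Ef]]]]].
  by exists 1, (fun t => if t is 0 then u else v), (fun=> e); split => // [] [].
exists n.+1, (fun t => if t is t'.+1 then f t' else u).
exists (fun t => if t is t'.+1 then h t' else e).
by split => // [] [|t] /=; [rewrite f0 | apply: Ef].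
Qed.

Section Network.
Variables (D Q : finType) (delta : Q -> Ops D -> Q -> bool).

Lemma PostP a (S : {set Q}) q' :
  reflect (exists2 q, q \in S & delta q (Recv a) q') (q' \in Post delta a S).
Proof. by rewrite inE; apply: exists_inP. Qed.

Lemma Post1P a q q' : reflect (delta q (Recv a) q') (q' \in Post delta a [set q]).
Proof. by apply: (iffP (PostP _ _ _)) => [[_ /set1P ->]|]; last exists q; rewrite ?inE. Qed.

Definition moves a q q' := [|| q' == q, delta q (Recv a) q' | delta q (Send a) q'].

Lemma movesxx a q : moves a q q.
Proof. by rewrite /moves eqxx. Qed.

Section Runs.
Variable k : nat.

Lemma cstep_send1 a (d : config Q k) x q :
  delta (d x) (Send a) q -> cstep delta d [ffun y => if y == x then q else d y].
Proof.
move=> dq; exists a, x; rewrite ffunE eqxx; split => //.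
exists set0; rewrite inE; split=> //; split=> [y|y _ yx]; first by rewrite inE.
by rewrite ffunE (negbTE yx).
Qed.

Lemma cstep_plus_sends a (c d d' : config Q k) :
  cstep_plus delta c d -> (forall x, d x = d' x \/ delta (d x) (Send a) (d' x)) ->
  cstep_plus delta c d'.
Proof.
move Nd : #|[set x | d x != d' x]| => N; elim: N d Nd => [|N IH] d Nd cd sends.
  suff -> : d' = d by [].
  by apply/ffunP => x; apply/esym/eqP; move: (card0_eq Nd x); rewrite inE => /negbFE.
have [x] : exists x, x \in [set x | d x != d' x] by apply/set0Pn; rewrite -card_gt0 Nd.
rewrite inE => dx; have dx' : delta (d x) (Send a) (d' x).
  by case: (sends x) => // dd; rewrite dd eqxx in dx.
apply: (IH _ _ (t_trans _ _ _ _ _ cd (t_step _ _ _ _ (cstep_send1 dx')))).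
  apply/eq_add_S; rewrite -Nd (cardsD1 x [set x | d x != d' x]) inE dx add1n.
  congr (_.+1); apply: eq_card => y.
  by rewrite !inE ffunE; case: (eqVneq y x) => [->|]; rewrite ?eqxx.
by move=> y; rewrite ffunE; case: eqVneq => [->|_]; [left|apply: sends].
Qed.

Lemma moves_cstep_plus a (c c' : config Q k) x0 :
  delta (c x0) (Send a) (c' x0) -> (forall x, moves a (c x) (c' x)) ->
  cstep_plus delta c c'.
Proof.
move=> send mv; pose R := [set x | (x != x0) && delta (c x) (Recv a) (c' x)].
pose d : config Q k := [ffun x => if (x == x0) || (x \in R) then c' x else c x].
have dE x : d x = if (x == x0) || (x \in R) then c' x else c x by rewrite ffunE.
apply: (@cstep_plus_sends a _ d); [apply: t_step; exists a, x0|].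
  rewrite dE eqxx; split => //; exists R; rewrite inE eqxx; split=> //; split=> [x|x].
    by move=> xR; rewrite dE xR orbT; move: xR; rewrite inE => /andP [].
  by rewrite dE => /negbTE -> /negbTE ->.
move=> x; rewrite dE; case: ifP => [_|]; first by left.
rewrite inE => /norP [x0x /nandP [/negP //|recv]].
by case/or3P: (mv x) => [/eqP ->|/negPn|]; [left|rewrite (negbTE recv)|right].
Qed.

End Runs.

Section Abstraction.
Variables (m k : nat) (s : 'I_m -> Q) (g : 'I_k -> 'I_m).

Definition fiber i := [set x | g x == i].

(* An empty class i is sent to [set s i], the value it has in the target vertex. *)
Definition abstraction (d : config Q k) : vertex Q m :=
  [ffun i => if fiber i == set0 then [set s i] else d @: fiber i].

Lemma abstractionE d x i : g x = i -> abstraction d i = d @: fiber i.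
Proof.
move=> gx; rewrite ffunE; case: eqP => // /setP /(_ x).
by rewrite !inE gx eqxx.
Qed.

Section Step.
Variables (a : D) (x0 : 'I_k) (R : {set 'I_k}) (c c' : config Q k).
Hypotheses (send : delta (c x0) (Send a) (c' x0)) (x0R : x0 \notin R)
  (recv : forall x, x \in R -> delta (c x) (Recv a) (c' x))
  (idle : forall x, x \notin R -> x != x0 -> c x = c' x).

Let stay i := fiber i :\: (x0 |: R).
(* Receivers bring their new states and take away the old ones no idle process keeps. *)
Let Gen i := c' @: (fiber i :&: R).
Let Kill i := c @: (fiber i :&: R) :\: c @: stay i.

Lemma imset_stay i : c @: stay i = c' @: stay i.
Proof.
by apply: eq_in_imset => x; rewrite !inE negb_or => /andP [/andP [] ? ? _]; apply: idle.
Qed.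

Lemma fiber_split i :
  fiber i = stay i :|: (fiber i :&: R) :|: (if g x0 == i then [set x0] else set0).
Proof.
apply/setP => x; rewrite !inE; case: (eqVneq x x0) => [->|xx0].
  by rewrite (negbTE x0R); case: eqP; rewrite ?inE ?eqxx ?orbT ?andbF.
by case: ifP; rewrite !inE ?(negbTE xx0) ?orbF //=; case: (g x == i); case: (x \in R).
Qed.

Lemma imset_fiber (d : config Q k) i : d @: fiber i =
  d @: stay i :|: d @: (fiber i :&: R) :|: (if g x0 == i then [set d x0] else set0).
Proof. by rewrite {1}fiber_split !imsetU; case: ifP; rewrite ?imset_set1 ?imset0. Qed.

Lemma receiver_abstraction y i : y \in fiber i :&: R ->
  c y \in abstraction c i /\ c' y \in Post delta a [set c y].
Proof.
case/setIP; rewrite inE => /eqP gy yR; split; last exact/Post1P/recv.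
by rewrite (abstractionE _ gy) imset_f // inE gy.
Qed.

Lemma Gedge_abstraction : Gedge delta (abstraction c) (abstraction c').
Proof.
have sender_mem (d : config Q k) : d x0 \in abstraction d (g x0).
  by rewrite (abstractionE _ (erefl _)) imset_f ?inE.
exists (g x0), (c x0), (c' x0), a; split; first by rewrite !sender_mem.
exists Gen, Kill; split.
- move=> i; apply/subsetP => _ /imsetP [y /receiver_abstraction [Sy Py] ->].
  by apply/PostP; exists (c y) => //; apply/Post1P.
- move=> i; apply/subsetP => _ /setDP [/imsetP [y /receiver_abstraction [Sy Py] ->] _].
  by rewrite /Enabled inE Sy; apply/set0Pn; exists (c' y).
- move=> i ij; have [/eqP fi0|/set0Pn [x]] := boolP (fiber i == set0).
    by rewrite /Gen /Kill !ffunE fi0 eqxx set0I !imset0 set0D setD0 setU0.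
  rewrite inE => /eqP gx; rewrite !(abstractionE _ gx) !imset_fiber eq_sym (negbTE ij).
  by rewrite !setU0 -imset_stay setUD_excess.
- (* the old state of the sender disappears unless an idle process keeps it *)
  exists (abstraction c (g x0) :\: ([set c x0] :\: c @: stay (g x0))).
  split; first exact: setD_excess1.
  by rewrite !(abstractionE _ (erefl _)) !imset_fiber eqxx -imset_stay setU3D_excess.
- move=> i _ /setDP [/imsetP [y yiR ->] _]; have [_ Py] := receiver_abstraction yiR.
  by apply/set0Pn; exists (c' y); rewrite inE Py imset_f.
Qed.

End Step.

Lemma abstraction_id (d : config Q k) :
  (forall x, s (g x) = d x) -> abstraction d = [ffun i => [set s i]].
Proof.
move=> sg; apply/ffunP => i; rewrite !ffunE; case: eqP => // /eqP /set0Pn [y].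
rewrite inE => /eqP gy; apply/setP => q; rewrite inE.
apply/imsetP/eqP => [[z]|->]; first by rewrite inE => /eqP gz ->; rewrite -sg gz.
by exists y; rewrite ?inE ?gy // -sg gy.
Qed.

Lemma cstep_plus_Gpath_plus d d' :
  cstep_plus delta d d' -> Gpath_plus delta (abstraction d) (abstraction d').
Proof.
elim=> [e e' [a [x0 [send [R [x0R [recv idle]]]]]]|e e' e'' _ IH _ IH'].
  by apply: t_step; apply: Gedge_abstraction send x0R recv idle.
exact: t_trans IH IH'.
Qed.
End Abstraction.

Section Moves.
Variable m : nat.

Definition Gmoves a (V V' : vertex Q m) : Prop :=
  [/\ exists j q q', [/\ q \in V j, q' \in V' j & delta q (Send a) q'],
      (forall i q', q' \in V' i -> exists2 q, q \in V i & moves a q q') &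
      (forall i q, q \in V i -> exists2 q', q' \in V' i & moves a q q')].

Lemma Gedge_Gmoves V V' : Gedge delta V V' -> exists a, Gmoves a V V'.
Proof.
case=> j [s0 [s1 [a [[Vs0 V's1 send] [Gen [Kill [GenP _ V'E [U [UE V'jE] KillG]]]]]]]].
pose Ui i := if i == j then U else V i.
have UiV i : Ui i \subset V i.
  by rewrite /Ui; case: eqP => [->|_] //; case: UE => ->; rewrite ?subsetDl.
have V'Ui i : V' i = (Ui i :\: Kill i) :|: Gen i :|: (if i == j then [set s1] else set0).
  by rewrite /Ui; case: eqVneq => [->|ij]; rewrite ?V'jE ?V'E ?setU0.
have GenV' i : Gen i \subset V' i.
  by rewrite V'Ui; apply/subsetP => q qG; rewrite !inE qG orbT.
exists a; split; first by exists j, s0, s1.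
- move=> i q'; rewrite V'Ui !inE => /orP [/orP [/andP [_ q'U]|q'G]|].
  + by exists q' => //; [apply: (subsetP (UiV i)) | exact: movesxx].
  + have /PostP [q Vq recv] := subsetP (GenP i) q' q'G.
    by exists q; rewrite // /moves recv orbT.
  + case: (eqVneq i j) => [-> /set1P ->|_]; last by rewrite inE.
    by exists s0; rewrite // /moves send !orbT.
- move=> i q Vq; have [qK|qK] := boolP (q \in Kill i).
    have /set0Pn [q' /setIP [/Post1P recv q'G]] := KillG i q qK.
    by exists q'; [apply: (subsetP (GenV' i)) | rewrite /moves recv orbT].
  have [qU|qU] := boolP (q \in Ui i).
    by exists q; [rewrite V'Ui !inE qU qK | exact: movesxx].
  move: qU; rewrite /Ui; case: eqVneq => [ij|_]; last by rewrite Vq.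
  case: UE => ->; rewrite ?inE -ij Vq ?andbT ?negbK //= => /eqP ->.
  by exists s1; rewrite /moves ?send ?orbT // V'Ui ij eqxx !inE eqxx orbT.
Qed.

End Moves.

Section Trajectories.
Variables (m : nat) (s : 'I_m -> Q).
Variables (n : nat) (V : nat -> vertex Q m) (a : nat -> D).
Hypotheses (V0 : V 0 = [ffun i => [set s i]]) (Vn : V n = [ffun i => [set s i]])
  (VG : forall t, t < n -> Gmoves (a t) (V t) (V t.+1)).

Lemma trajectory_to t i q : t <= n -> q \in V t i ->
  exists f : nat -> Q,
    [/\ f 0 = s i, f t = q & forall u, u < t -> moves (a u) (f u) (f u.+1)].
Proof.
elim: t q => [|t IH] q tn.
  rewrite V0 ffunE => /set1P ->.
  by exists (fun=> s i); split=> // u _; apply: movesxx.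
have [_ back _] := VG tn; case/back => q0 /(IH q0 (ltnW tn)) [f [f0 ft fmv] mv0].
exists (fun u => if u <= t then f u else q); rewrite leq0n ltnn; split=> // u.
by rewrite ltnS; case: (ltngtP u t) => // [ut _|-> _]; [apply: fmv | rewrite ft].
Qed.

Lemma trajectory_from t i q : t <= n -> q \in V t i ->
  exists f : nat -> Q,
    [/\ f t = q, f n = s i & forall u, t <= u -> u < n -> moves (a u) (f u) (f u.+1)].
Proof.
move=> /subnKC; move: (n - t) => d; elim: d t q => [|d IH] t q; rewrite ?addn0 => tdn.
  rewrite tdn Vn ffunE => /set1P ->.
  by exists (fun=> s i); split=> // u _ _; apply: movesxx.
have tn : t < n by rewrite -tdn -addSnnS leq_addr.
have [_ _ forth] := VG tn; case/forth => q' /(IH t.+1 q') [|f [ft fn fmv] mv0].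
  by rewrite addSnnS.
exists (fun u => if u <= t then q else f u); rewrite leqnn leqNgt tn; split=> // u.
by case: (ltngtP t u) => // [tu _|<- _]; [apply: fmv | rewrite ft].
Qed.

Lemma trajectory_through t i q q' : t < n -> q \in V t i -> q' \in V t.+1 i ->
  moves (a t) q q' -> exists f : nat -> Q,
    [/\ f 0 = s i, f n = s i, f t = q, f t.+1 = q'
       & forall u, u < n -> moves (a u) (f u) (f u.+1)].
Proof.
move=> tn /(trajectory_to (ltnW tn)) [f1 [f10 f1t mv1]].
move=> /(trajectory_from tn) [f2 [f2t f2n mv2]] mvt.
exists (fun u => if u <= t then f1 u else f2 u); rewrite leq0n leqnn ltnn leqNgt tn.
split=> // u un; case: (ltngtP u t) => [ut|tu|->]; [exact: mv1 | | by rewrite f1t f2t].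
by apply: mv2.
Qed.

Definition trajectory := ('I_m * {ffun 'I_n.+1 -> Q})%type.

Definition traj_at (f : {ffun 'I_n.+1 -> Q}) u := f (inord u).

Definition valid_trajectory (p : trajectory) : bool :=
  [&& traj_at p.2 0 == s p.1, traj_at p.2 n == s p.1 &
      [forall u : 'I_n, moves (a u) (traj_at p.2 u) (traj_at p.2 u.+1)]].

Let K := #|{: {p : trajectory | valid_trajectory p}}|.

Definition process (x : 'I_K) : trajectory := val (enum_val x).

Definition trajectory_config t : config Q K := [ffun x => traj_at (process x).2 t].

Local Notation cfg := trajectory_config.

Lemma process_of_path i (f : nat -> Q) :
  f 0 = s i -> f n = s i -> (forall u, u < n -> moves (a u) (f u) (f u.+1)) ->
  exists x, (process x).1 = i /\ forall u, u <= n -> cfg u x = f u.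
Proof.
move=> f0 fn fmv; pose p : trajectory := (i, [ffun u : 'I_n.+1 => f u]).
have atE u : u <= n -> traj_at p.2 u = f u by move=> un; rewrite /traj_at ffunE inordK.
have vp : valid_trajectory p.
  rewrite /valid_trajectory !atE ?f0 ?fn ?eqxx //=.
  by apply/forallP => u; rewrite !atE ?fmv // ltnW.
pose x := enum_rank (Sub p vp : {p | valid_trajectory p}).
have px : process x = p by rewrite /process enum_rankK.
by exists x; rewrite px; split=> // u un; rewrite ffunE px atE.
Qed.

Lemma config_moves t x : t < n -> moves (a t) (cfg t x) (cfg t.+1 x).
Proof.
move=> tn; have /and3P [_ _ /forallP /(_ (Ordinal tn))] := valP (enum_val x).
by rewrite !ffunE.
Qed.

Lemma config0 x : cfg 0 x = s (process x).1.
Proof. by have /and3P [/eqP <- _ _] := valP (enum_val x); rewrite ffunE. Qed.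

Lemma config_n : cfg n = cfg 0.
Proof.
apply/ffunP => x; rewrite config0.
by have /and3P [_ /eqP <- _] := valP (enum_val x); rewrite ffunE.
Qed.

Lemma config_sender t : t < n -> exists x, delta (cfg t x) (Send (a t)) (cfg t.+1 x).
Proof.
move=> tn; have [[j [q [q' [Vq Vq' send]]]] _ _] := VG tn.
have [|f [f0 fn ft ft1 fmv]] := trajectory_through tn Vq Vq'.
  by rewrite /moves send !orbT.
have [x [_ fx]] := process_of_path f0 fn fmv.
by exists x; rewrite !fx ?ft ?ft1 // ltnW.
Qed.

Lemma SetC_config0 : SetC (cfg 0) = [set s i | i in 'I_m].
Proof.
apply/setP => q; apply/imsetP/imsetP => [[x _ ->]|[i _ ->]].
  by exists (process x).1; rewrite ?config0.
have [|x [xi _]] := @process_of_path i (fun=> s i) erefl erefl => [u _|].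
  exact: movesxx.
by exists x; rewrite ?config0 ?xi.
Qed.

Lemma config_run t : 0 < t -> t <= n -> cstep_plus delta (cfg 0) (cfg t).
Proof.
have step u : u < n -> cstep_plus delta (cfg u) (cfg u.+1).
  move=> un; have [x send] := config_sender un.
  by apply: moves_cstep_plus send _ => y; apply: config_moves.
elim: t => [//|[|t] IH] _ tn; first exact: step.
exact: t_trans (IH erefl (ltnW tn)) (step _ tn).
Qed.

Lemma trajectory_cycle : 0 < n ->
  exists k (c : config Q k), SetC c = [set s i | i in 'I_m] /\ cstep_plus delta c c.
Proof.
move=> n_gt0; exists K, (cfg 0); split; first exact: SetC_config0.
by rewrite -{2}config_n; apply: config_run.
Qed.

End Trajectories.

End Network.

Theorem lemma2 (D Q : finType) (I : {set Q}) (delta : Q -> Ops D -> Q -> bool)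
  (m : nat) (s : 'I_m -> Q) :
  m <= #|Q| ->
  (Gpath_plus delta [ffun i => [set s i]] [ffun i => [set s i]] <->
   exists (k : nat) (c : config Q k),
     SetC c = [set s i | i in 'I_m] /\ cstep_plus delta c c).
Proof.
(* the bound on m only keeps G finite *)
move=> _; split.
  case/(clos_trans_labelled_path (@Gedge_Gmoves D Q delta m)).
  move=> n [V [a [n_gt0 V0 Vn VG]]].
  exact: trajectory_cycle V0 Vn VG n_gt0.
case=> k [c [SetCc cyc]].
have [x0 _] : exists x0 : 'I_k, True.
  by elim: cyc => [_ _ [_ [x _]] | _ _ _ _ ex _ _]; [exists x | exact: ex].
have labelled x : c x \in [set s i | i in 'I_m] by rewrite -SetCc imset_f.
have [i0 _ _] := imsetP (labelled x0).
pose g x := odflt i0 [pick i | s i == c x].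
have sg x : s (g x) = c x.
  rewrite /g; case: pickP => [i /eqP //|none].
  by case/imsetP: (labelled x) => i _ ci; move: (none i); rewrite ci eqxx.
rewrite -(abstraction_id sg); exact: cstep_plus_Gpath_plus.
Qed.
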